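(* Let $I$ be a BI instance with matroid intersection constraint $(\mathcal I_1,\mathcal I_2)$, $0<\varepsilon<\tfrac12$, $\tfrac{\mathrm{OPT}(I)}{2}\le\alpha\le\mathrm{OPT}(I)$, and $r\in[\log_{1-\varepsilon}(\varepsilon/2)+1]$. Let $U\subseteq\mathcal K_r(\alpha)$, $\Delta\in\mathcal M_{\le q(\varepsilon)}$, and let $B$ be a minimum basis of $[(E,\mathcal I_2)\cap U]_{\le q(\varepsilon)}$ with respect to $c$. Let $a\in(U\cap\Delta)\setminus B$. Then there is $b\in B\setminus\Delta$ such that $b$ is a shift to $a$ for $\Delta$ or $b$ is a semi-shift to $a$ for $\Delta$.
   Context: A BI instance is $I=(E,\mathcal C,c,p,\beta)$ where $\mathcal C=(\mathcal I_1,\mathcal I_2)$ with $(E,\mathcal I_1),(E,\mathcal I_2)$ matroids, $c,p:E\to\mathbb R_{\ge0}$, $\beta\ge0$; $\mathcal M=\mathcal I_1\cap\mathcal I_2$; a solution is $S\in\mathcal M$ with $c(S)\le\beta$, and $\mathrm{OPT}(I)$ is the maximum of $p(S)=\sum_{e\in S}p(e)$ over solutions. $q(\varepsilon)=\lceil\varepsilon^{-1/\varepsilon}\rceil$; $\mathcal M_{\le q(\varepsilon)}=\{A\in\mathcal M:|A|\le q(\varepsilon)\}$; $[k]=\{1,\dots,\lfloor k\rfloor\}$; $A+e=A\cup\{e\}$, $A-e=A\setminus\{e\}$. Profit class: $\mathcal K_r(\alpha)=\{e\in E: \tfrac{p(e)}{2\alpha}\in((1-\varepsilon)^r,(1-\varepsilon)^{r-1}]\}$.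 $[(E,\mathcal I_2)\cap U]_{\le q}$ is the matroid with ground set $U$ and independent sets $\{A\in\mathcal I_2: A\subseteq U, |A|\le q\}$; a minimum basis w.r.t. $c$ is a basis of minimum total cost. For $\Delta\in\mathcal M_{\le q(\varepsilon)}$, $a\in\Delta\cap\mathcal K_r(\alpha)$ and $b\in\mathcal K_r(\alpha)\setminus\Delta$: $b$ is a shift to $a$ for $\Delta$ if $c(b)\le c(a)$ and $\Delta-a+b\in\mathcal M_{\le q(\varepsilon)}$; $b$ is a semi-shift to $a$ for $\Delta$ if $c(b)\le c(a)$, $\Delta-a+b\in\mathcal I_2$ and $\Delta-a+b\notin\mathcal I_1$. *)

From HB Require Import structures.
From mathcomp Require Import all_boot all_order all_algebra.
From mathcomp Require Import all_classical all_reals all_analysis.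
Set Implicit Arguments. Unset Strict Implicit. Unset Printing Implicit Defensive.
Import Order.TTheory GRing.Theory Num.Theory.
Local Open Scope ring_scope.

Section BI.
Variables (E : finType) (R : realType).

Definition is_matroid (I : pred {set E}) : Prop :=
  [/\ I (finset.set0 : {set E}),
      (forall A B : {set E}, B \subset A -> I A -> I B) &
      (forall A B : {set E}, I A -> I B -> (#|A| < #|B|)%N ->
          exists2 e, e \in B :\: A & I (e |: A))].

Definition wsum (w : E -> R) (S : {set E}) : R := \sum_(e in S) w e.

Definition is_solution (I1 I2 : pred {set E}) (c : E -> R) (beta : R)
  (S : {set E}) : bool := [&& I1 S, I2 S & wsum c S <= beta].

(* OPT(I) = max of p(S) over solutions S (empty set is always a solution
   when beta >= 0 and c >= 0; profits are >= 0) *)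
Definition OPT (I1 I2 : pred {set E}) (c p : E -> R) (beta : R) : R :=
  \big[Num.max/0]_(S : {set E} | is_solution I1 I2 c beta S) wsum p S.

Definition q_eps (eps : R) : nat := `|Num.ceil (eps `^ (- eps^-1))|%N.

Definition Mle (I1 I2 : pred {set E}) (q : nat) (A : {set E}) : bool :=
  [&& I1 A, I2 A & (#|A| <= q)%N].

Definition Kclass (p : E -> R) (eps alpha : R) (r : nat) : {set E} :=
  [set e | ((1 - eps) ^+ r < p e / (2 * alpha)) &&
           (p e / (2 * alpha) <= (1 - eps) ^+ r.-1)].

Definition restr_trunc (I2 : pred {set E}) (U : {set E}) (q : nat)
  (A : {set E}) : bool := [&& I2 A, A \subset U & (#|A| <= q)%N].

Definition is_basis (J : pred {set E}) (B : {set E}) : Prop :=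
  J B /\ (forall X : {set E}, J X -> B \subset X -> X = B).

Definition is_min_basis (J : pred {set E}) (c : E -> R) (B : {set E}) : Prop :=
  is_basis J B /\ (forall B' : {set E}, is_basis J B' -> wsum c B <= wsum c B').

Definition is_shift (I1 I2 : pred {set E}) (c p : E -> R) (eps alpha : R)
  (r : nat) (Delta : {set E}) (a b : E) : Prop :=
  [/\ Mle I1 I2 (q_eps eps) Delta, a \in Delta :&: Kclass p eps alpha r,
      b \in Kclass p eps alpha r :\: Delta, c b <= c a &
      Mle I1 I2 (q_eps eps) (b |: (Delta :\ a))].

Definition is_semi_shift (I1 I2 : pred {set E}) (c p : E -> R) (eps alpha : R)
  (r : nat) (Delta : {set E}) (a b : E) : Prop :=
  [/\ Mle I1 I2 (q_eps eps) Delta, a \in Delta :&: Kclass p eps alpha r,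
      b \in Kclass p eps alpha r :\: Delta, c b <= c a &
      (I2 (b |: (Delta :\ a)) /\ ~~ I1 (b |: (Delta :\ a)))].

End BI.

From HB Require Import structures.
From mathcomp Require Import all_boot all_order all_algebra.
From mathcomp Require Import all_classical all_reals all_analysis.
Import Order.TTheory GRing.Theory Num.Theory.
(* The finite-set lemmas below are shadowed by homonymous lemmas on
   classical sets. *)
Local Notation subsetP := fintype.subsetP.
Local Notation subset_trans := fintype.subset_trans.
Local Notation subsetUr := finset.subsetUr.
Local Notation subUset := finset.subUset.
Local Notation sub1set := finset.sub1set.
Local Notation setUS := finset.setUS.
Local Notation eqEsubset := finset.eqEsubset.
Local Notation sub0set := finset.sub0set.
Local Notation setUidPr := finset.setUidPr.
Local Open Scope ring_scope.
Set Implicit Arguments. Unset Strict Implicit. Unset Printing Implicit Defensive.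

(* Let T be the elements of the minimum basis B that cost at most c(a).
   1. The truncated restriction [(E,I2) ∩ U]_{<=q} is again a matroid, and
      for a minimum-cost basis B of a matroid J and a ∉ B, the set
      a + {b ∈ B | c(b) <= c(a)} is J-dependent: otherwise it extends to a
      basis containing a, which is obtained from B by trading an element
      b with c(b) > c(a) for a, hence is strictly cheaper.
   2. Reading this dependence in [(E,I2) ∩ U]_{<=q} gives:
      either a + T ∉ I2, or |T| >= q >= |Δ|.
   3. A matroid exchange lemma: if D, T are independent, a ∈ D \ T, and
      either |D| <= |T| or a + T is dependent, then D - a + b is
      independent for some b ∈ T \ D.  Applied in (E,I2) to D = Δ it yields
      b ∈ B \ Δ with c(b) <= c(a) and Δ - a + b ∈ I2.
   4. Depending on whether Δ - a + b ∈ I1, b is a shift or a semi-shift.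
   The general matroid facts (maximal extensions, the two exchange lemmas,
   bases and minimum bases) come first. *)

Lemma max_card_exists (T : finType) (P : pred {set T}) (S0 : {set T}) :
  P S0 -> exists2 W, P W & forall X, P X -> (#|X| <= #|W|)%N.
Proof.
by move=> PS0; case: (arg_maxnP (fun W : {set T} => #|W|) PS0) => W; exists W.
Qed.

Section MatroidFacts.
Variables (E : finType) (I : pred {set E}).
Hypothesis matI : is_matroid I.

Lemma matroid_hereditary (A B : {set E}) : B \subset A -> I A -> I B.
Proof. by case: matI => _ + _; apply. Qed.

Lemma matroid_augment (A B : {set E}) :
  I A -> I B -> (#|A| < #|B|)%N -> exists2 e, e \in B :\: A & I (e |: A).
Proof. by case: matI => _ _; apply. Qed.

Lemma maximal_is_maximum (Z X : {set E}) :
  I Z -> (forall e, e \in X :\: Z -> ~~ I (e |: Z)) ->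
  forall W, I W -> W \subset Z :|: X -> (#|W| <= #|Z|)%N.
Proof.
move=> IZ noext W IW WZX; rewrite leqNgt; apply/negP => ltZW.
have [e] := matroid_augment IZ IW ltZW; rewrite inE => /andP [eZ eW] IeZ.
have eX : e \in X by move: (subsetP WZX e eW); rewrite inE (negbTE eZ).
by move: (noext e); rewrite inE eZ eX IeZ => /(_ isT).
Qed.

Lemma maximal_extension (T X : {set E}) : I T -> T \subset X ->
  exists2 W, [&& I W, T \subset W & W \subset X] &
    forall e, e \in X :\: W -> ~~ I (e |: W).
Proof.
move=> IT TX.
pose P W := [&& I W, T \subset W & W \subset X].
have [|W PW Wmax] := max_card_exists (P := P) (S0 := T).
  by rewrite /P IT subxx.
exists W => // e; rewrite inE => /andP [eW eX]; apply/negP => IeW.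
case/and3P: PW => _ TW WX.
have : P (e |: W).
  by rewrite /P IeW (subset_trans TW (subsetUr _ _)) subUset sub1set eX.
by move/Wmax; rewrite cardsU1 eW add1n ltnn.
Qed.

Lemma card_exchange (D T : {set E}) (a : E) :
  I D -> a \in D -> I T -> a \notin T -> (#|D| <= #|T|)%N ->
  exists2 b, b \in T :\: D & I (b |: (D :\ a)).
Proof.
move=> ID aD IT aT DT.
have IZ : I (D :\ a) := matroid_hereditary (subD1set D a) ID.
have ltZT : (#|D :\ a| < #|T|)%N by rewrite (cardsD1 a D) aD in DT.
have [b] := matroid_augment IZ IT ltZT; rewrite !inE => /andP [bZ bT] Ib.
exists b => //; rewrite inE bT andbT.
by apply: contra bZ => bD; rewrite bD andbT; apply: contraNneq aT => <-.
Qed.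

Lemma span_exchange (D T : {set E}) (a : E) :
  I D -> a \in D -> I T -> ~~ I (a |: T) ->
  exists2 b, b \in T :\: D & I (b |: (D :\ a)).
Proof.
move=> ID aD IT IaT; set Z := D :\ a.
have aT : a \notin T.
  by apply: contra IaT => aT; rewrite (setUidPr _) ?sub1set.
have IZ : I Z := matroid_hereditary (subD1set D a) ID.
apply: contrapT => noexch.
have Z_max : forall e, e \in T :\: Z -> ~~ I (e |: Z).
  move=> e; rewrite !inE negb_and negbK => /andP [/orP [/eqP -> | eD] eT].
    by rewrite eT in aT.
  by apply/negP => IeZ; apply: noexch; exists e; rewrite ?inE ?eD.
have [W /and3P [IW TW WZT] W_max] := maximal_extension IT (subsetUr Z T).
have ltWD : (#|W| < #|D|)%N.
  by rewrite (cardsD1 a D) aD ltnS (maximal_is_maximum IZ Z_max).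
have [e] := matroid_augment IW ID ltWD; rewrite inE => /andP [eW eD] IeW.
have [ea | nea] := eqVneq e a.
  by move/negP: IaT; apply; apply: matroid_hereditary IeW; rewrite -ea setUS.
have eZ : e \in Z by rewrite !inE nea.
have : e \in (Z :|: T) :\: W by rewrite inE eW inE eZ.
by move/W_max; rewrite IeW.
Qed.

Lemma basis_of_card (B W : {set E}) :
  is_basis I B -> I W -> (#|B| <= #|W|)%N -> is_basis I W.
Proof.
move=> [IB Bmax] IW BW; split=> // X IX WX; apply/eqP.
rewrite eqEsubset WX andbT; apply/contraT => XW.
have ltBX : (#|B| < #|X|)%N.
  by apply: (leq_ltn_trans BW); apply: proper_card; rewrite properE WX XW.
have [e] := matroid_augment IB IX ltBX; rewrite inE => /andP [eB _] IeB.
by move: eB; rewrite -(Bmax _ IeB (subsetUr _ _)) setU11.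
Qed.

Section Bases.
Variables (R : realType) (c : E -> R).
Hypothesis c_ge0 : forall e, 0 <= c e.

Definition cheaper (B : {set E}) (a : E) : {set E} :=
  [set b in B | c b <= c a].

Lemma cheaper_sub (B : {set E}) (a : E) : cheaper B a \subset B.
Proof. by apply/subsetP => x; rewrite inE => /andP []. Qed.

Lemma wsum_trade (B W : {set E}) (a b : E) :
  a \notin B -> a \in W -> W \subset a |: B -> b \in B :\: W -> c a < c b ->
  wsum c W < wsum c B.
Proof.
move=> aB aW WaB bBW ltab.
have WaBW : W :\ a = B :&: W.
  apply/setP => x; rewrite !inE; have [-> | xa] := eqVneq x a.
    by rewrite (negbTE aB).
  by case xW: (x \in W); rewrite ?andbF //= andbT; move: (subsetP WaB x xW);
    rewrite !inE (negbTE xa).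
have ge_BW : c b <= wsum c (B :\: W).
  rewrite /wsum (big_setD1 b bBW) lerDl; apply: sumr_ge0 => x _; exact: c_ge0.
rewrite /wsum (big_setD1 a aW) WaBW [X in _ < X](big_setID W) /= addrC ltrD2l.
exact: lt_le_trans ge_BW.
Qed.

Lemma min_basis_cheaper_dependent (B : {set E}) (a : E) :
  is_min_basis I c B -> a \notin B -> ~~ I (a |: cheaper B a).
Proof.
move=> [[IB Bmax] Bmin] aB; apply/negP => IaT.
have [W /and3P [IW TW WaB] W_max] :=
  maximal_extension IaT (setUS [set a] (cheaper_sub B a)).
have aW : a \in W by apply: (subsetP TW); rewrite setU11.
have BW : (#|B| <= #|W|)%N.
  apply: (maximal_is_maximum IW W_max IB).
  exact: subset_trans (subsetUr [set a] B) (subsetUr W _).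
have [b bB bW] : exists2 b, b \in B & b \notin W.
  apply/subsetPn/negP => /(Bmax W IW) WB.
  by rewrite -WB aW in aB.
have ltab : c a < c b.
  rewrite ltNge; apply: contra bW => leba.
  by apply: (subsetP TW); rewrite !inE bB leba orbT.
have := Bmin W (basis_of_card (conj IB Bmax) IW BW).
by rewrite leNgt (wsum_trade (b := b) aB aW WaB) // inE bW.
Qed.

End Bases.
End MatroidFacts.

Lemma restr_trunc_matroid (E : finType) (I2 : pred {set E}) (U : {set E})
    (q : nat) :
  is_matroid I2 -> is_matroid (restr_trunc I2 U q).
Proof.
move=> matI2; split.
- by case: matI2 => I0 _ _; rewrite /restr_trunc I0 sub0set cards0.
- move=> A B BA /and3P [IA AU Aq].
  rewrite /restr_trunc (matroid_hereditary matI2 BA IA) (subset_trans BA AU).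
  exact: leq_trans (subset_leq_card BA) Aq.
- move=> A B /and3P [IA AU Aq] /and3P [IB BU Bq] ltAB.
  have [e eBA IeA] := matroid_augment matI2 IA IB ltAB; exists e => //.
  move: eBA; rewrite inE => /andP [eA eB].
  rewrite /restr_trunc IeA subUset sub1set (subsetP BU e eB) AU cardsU1 eA.
  exact: leq_trans ltAB Bq.
Qed.

Lemma restr_trunc_dependent (E : finType) (I2 : pred {set E})
    (U T : {set E}) (q : nat) (a : E) :
  T \subset U -> a \in U -> a \notin T ->
  ~~ restr_trunc I2 U q (a |: T) -> ~~ I2 (a |: T) \/ (q <= #|T|)%N.
Proof.
move=> TU aU aT; rewrite /restr_trunc subUset sub1set aU TU cardsU1 aT /=.
by case: (I2 _) => /=; [rewrite -ltnNge add1n ltnS; right | left].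
Qed.

Lemma shift_or_semi_shift (E : finType) (R : realType)
    (I1 I2 : pred {set E}) (c p : E -> R) (eps alpha : R) (r : nat)
    (Delta : {set E}) (a b : E) :
  Mle I1 I2 (q_eps eps) Delta -> a \in Delta :&: Kclass p eps alpha r ->
  b \in Kclass p eps alpha r :\: Delta -> c b <= c a ->
  I2 (b |: (Delta :\ a)) ->
  is_shift I1 I2 c p eps alpha r Delta a b \/
  is_semi_shift I1 I2 c p eps alpha r Delta a b.
Proof.
move=> MD aDK bKD cba I2b.
case I1b: (I1 (b |: (Delta :\ a))); last by right; split; rewrite ?I1b.
left; split => //; apply/and3P; split => //.
have [aD bD] : a \in Delta /\ b \notin Delta.
  by move: aDK bKD; rewrite !inE => /andP [-> _] /andP [-> _].
case/and3P: MD => _ _ Dq; apply: leq_trans Dq.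
by rewrite cardsU1 !inE (negbTE bD) andbF (cardsD1 a Delta) aD.
Qed.

Theorem mainTheorem12 (E : finType) (R : realType)
  (I1 I2 : pred {set E}) (c p : E -> R) (beta eps alpha : R) (r : nat)
  (U Delta B : {set E}) (a : E) :
  is_matroid I1 -> is_matroid I2 ->
  (forall e, 0 <= c e) -> (forall e, 0 <= p e) -> 0 <= beta ->
  0 < eps -> eps < 1 / 2 ->
  OPT I1 I2 c p beta / 2 <= alpha -> alpha <= OPT I1 I2 c p beta ->
  (1 <= r)%N -> r%:R <= ln (eps / 2) / ln (1 - eps) + 1 ->
  U \subset Kclass p eps alpha r ->
  Mle I1 I2 (q_eps eps) Delta ->
  is_min_basis (restr_trunc I2 U (q_eps eps)) c B ->
  a \in (U :&: Delta) :\: B ->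
  exists2 b, b \in B :\: Delta &
    (is_shift I1 I2 c p eps alpha r Delta a b \/
     is_semi_shift I1 I2 c p eps alpha r Delta a b).
Proof.
move=> _ matI2 c_ge0 _ _ _ _ _ _ _ _ UK MD Bmin.
rewrite !inE => /andP [aB /andP [aU aD]].
set q := q_eps eps in MD Bmin *; set T := cheaper c B a.
have matJ := restr_trunc_matroid U q matI2.
have [[JB _] _] := Bmin; have BU : B \subset U by case/and3P: JB.
have TB : T \subset B := cheaper_sub c B a.
have /and3P [I2T TU _] := matroid_hereditary matJ TB JB.
have aT : a \notin T by apply: contra aB; apply: (subsetP TB).
have nJaT := min_basis_cheaper_dependent matJ c_ge0 Bmin aB.
case/and3P: (MD) => _ I2D Dq.
have [b] : exists2 b, b \in T :\: Delta & I2 (b |: (Delta :\ a)).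
  case: (restr_trunc_dependent TU aU aT nJaT) => [I2aT | qT].
  - exact: (span_exchange matI2 I2D aD I2T I2aT).
  - exact: (card_exchange matI2 I2D aD I2T aT (leq_trans Dq qT)).
rewrite !inE => /andP [bD /andP [bB cba]] I2b.
exists b; first by rewrite inE bD bB.
have aK := subsetP UK a aU; have bK := subsetP UK b (subsetP BU b bB).
by apply: shift_or_semi_shift; rewrite // inE ?aD ?bD ?aK ?bK.
Qed.
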